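(* Let $\mathbf A\in\mathbb H^{m\times n}$ and $t\in\mathbb R$. Then for all $i=1,\dots,n$ and $j=1,\dots,m$, \[ \operatorname{rdet}_j\big((t\mathbf I+\mathbf A\mathbf A^{*})_{j.}(\mathbf a^{*}_{i.})\big)=r_1^{(ij)}t^{m-1}+r_2^{(ij)}t^{m-2}+\dots+r_m^{(ij)}, \] where $r_m^{(ij)}=\operatorname{rdet}_j\big((\mathbf A\mathbf A^{*})_{j.}(\mathbf a^{*}_{i.})\big)$ and $r_k^{(ij)}=\sum_{\alpha\in I_{k,m}\{j\}}\operatorname{rdet}_j\Big(\big((\mathbf A\mathbf A^{*})_{j.}(\mathbf a^{*}_{i.})\big)^{\alpha}_{\alpha}\Big)$ for $k=1,\dots,m-1$.
   Context: $\mathbb H$ is the quaternion skew field, $\mathbf A^*$ the conjugate transpose, $\mathbf a^*_{i.}$ the $i$th row of $\mathbf A^*$; $\mathbf M_{j.}(\mathbf b)$ is $\mathbf M$ with its $j$th row replaced by the row $\mathbf b$. Row determinant of $\mathbf M=(m_{ab})\in\mathbb H^{m\times m}$: $\operatorname{rdet}_j\mathbf M=\sum_{\sigma\in S_m}(-1)^{m-r}m_{j\,j_{k_1}}m_{j_{k_1}j_{k_1+1}}\cdots m_{j_{k_1+l_1}\,j}\cdots m_{j_{k_r}j_{k_r+1}}\cdots m_{j_{k_r+l_r}j_{k_r}}$, where $\sigma=(j\,j_{k_1}\dots j_{k_1+l_1})(j_{k_2}\dots j_{k_2+l_2})\cdots(j_{k_r}\dots j_{k_r+l_r})$ is the decomposition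 of $\sigma$ into $r$ disjoint cycles (fixed points included), the first cycle starting with $j$, each other cycle starting with its smallest element, and $j_{k_2}<\dots<j_{k_r}$. $L_{k,m}$ is the set of strictly increasing $k$-sequences from $\{1,\dots,m\}$ and $I_{k,m}\{j\}=\{\alpha\in L_{k,m}:j\in\alpha\}$. $\mathbf N^{\alpha}_{\alpha}$ is the principal submatrix with rows and columns indexed by $\alpha$; in $\operatorname{rdet}_j(\mathbf N^\alpha_\alpha)$ the subscript $j$ refers to the row of the submatrix coming from row $j$ of $\mathbf N$. *)

From HB Require Import structures.
From mathcomp Require Import all_boot all_order all_algebra all_fingroup.
From mathcomp Require Import ring.
Set Implicit Arguments. Unset Strict Implicit. Unset Printing Implicit Defensive.
Import Order.TTheory GRing.Theory Num.Theory.
Local Open Scope ring_scope.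

Section Quat.
Variable R : comNzRingType.

Record quat := Quat { qa : R; qb : R; qc : R; qd : R }.

Definition quat2tuple (q : quat) := (qa q, qb q, qc q, qd q).
Definition tuple2quat (x : R * R * R * R) :=
  let: (a, b, c, d) := x in Quat a b c d.
Lemma quat2tupleK : cancel quat2tuple tuple2quat. Proof. by case. Qed.

HB.instance Definition _ := Equality.copy quat (can_type quat2tupleK).
HB.instance Definition _ := Choice.copy quat (can_type quat2tupleK).

Definition qzero := Quat 0 0 0 0.
Definition qone := Quat 1 0 0 0.
Definition qopp (x : quat) := Quat (- qa x) (- qb x) (- qc x) (- qd x).
Definition qadd (x y : quat) :=
  Quat (qa x + qa y) (qb x + qb y) (qc x + qc y) (qd x + qd y).
Definition qmul (x y : quat) :=
  Quat (qa x * qa y - qb x * qb y - qc x * qc y - qd x * qd y)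
       (qa x * qb y + qb x * qa y + qc x * qd y - qd x * qc y)
       (qa x * qc y - qb x * qd y + qc x * qa y + qd x * qb y)
       (qa x * qd y + qb x * qc y - qc x * qb y + qd x * qa y).

Lemma qaddA : associative qadd.
Proof. by case=> ????[????][????]; rewrite /qadd /=; congr Quat; ring. Qed.
Lemma qaddC : commutative qadd.
Proof. by case=> ????[????]; rewrite /qadd /=; congr Quat; ring. Qed.
Lemma qadd0 : left_id qzero qadd.
Proof. by case=> ????; rewrite /qadd /=; congr Quat; ring. Qed.
Lemma qaddN : left_inverse qzero qopp qadd.
Proof. by case=> ????; rewrite /qadd /=; congr Quat; ring. Qed.

HB.instance Definition _ := GRing.isZmodule.Build quat qaddA qaddC qadd0 qaddN.

Lemma qmulA : associative qmul.
Proof. by case=> ????[????][????]; rewrite /qmul /=; congr Quat; ring. Qed.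
Lemma qmul1 : left_id qone qmul.
Proof. by case=> ????; rewrite /qmul /=; congr Quat; ring. Qed.
Lemma qmulr1 : right_id qone qmul.
Proof. by case=> ????; rewrite /qmul /=; congr Quat; ring. Qed.
Lemma qmulDl : left_distributive qmul qadd.
Proof. by case=> ????[????][????]; rewrite /qmul /= /qadd /=; congr Quat; ring. Qed.
Lemma qmulDr : right_distributive qmul qadd.
Proof. by case=> ????[????][????]; rewrite /qmul /= /qadd /=; congr Quat; ring. Qed.
Lemma qone_neq0 : qone != 0.
Proof.
apply/negP=> /eqP /(congr1 qa) /= /eqP; rewrite oner_eq0 //.
Qed.

HB.instance Definition _ :=
  GRing.Zmodule_isNzRing.Build quat qmulA qmul1 qmulr1 qmulDl qmulDr qone_neq0.

Definition qreal (r : R) : quat := Quat r 0 0 0.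
Definition qconj (x : quat) : quat := Quat (qa x) (- qb x) (- qc x) (- qd x).

End Quat.

Definition conjtr (R : comNzRingType) m n (A : 'M[quat R]_(m, n)) : 'M[quat R]_(n, m) :=
  \matrix_(i, j) qconj (A j i).

Definition row_repl (T : Type) m n (M : 'M[T]_(m, n)) (j : 'I_m) (b : 'rV[T]_n)
  : 'M[T]_(m, n) :=
  \matrix_(k, l) if k == j then b 0 l else M k l.

Section RowDet.
Variable R : comNzRingType.
Variable m : nat.
Implicit Types (M : 'M[quat R]_m) (s : 'S_m).

Definition cycle_prod M s (c : 'I_m) : quat R :=
  \prod_(k < #|porbit s c|) M ((s ^+ k)%g c) ((s ^+ k.+1)%g c).

Definition cycle_head s (c : 'I_m) : bool := [forall d in porbit s c, (c <= d)%N].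

(* rdet_j M = sum_s (-1)^(m-r) (cycle of j, starting at j)
                      (other cycles, each starting with its smallest element,
                       in increasing order of these smallest elements),
   r = number of cycles of s (fixed points included) *)
Definition rdet (j : 'I_m) M : quat R :=
  \sum_(s : 'S_m)
     (-1) ^+ (m - #|porbits s|) *
     (cycle_prod M s j *
      \prod_(c : 'I_m | (c \notin porbit s j) && cycle_head s c) cycle_prod M s c).

End RowDet.

(* rdet_j (N^alpha_alpha): the principal submatrix of N with rows and columns
   indexed by alpha (in increasing order), row determinant taken along the row
   coming from row j of N (0 if j is not in alpha, which never happens below) *)
Definition rdet_principal (R : comNzRingType) m (N : 'M[quat R]_m)
   (alpha : {set 'I_m}) (j : 'I_m) : quat R :=
  match [pick a : 'I_#|alpha| | enum_val a == j] with
  | Some a => rdet a (\matrix_(a1, a2) N (enum_val a1) (enum_val a2))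
  | None => 0
  end.

From HB Require Import structures.
From mathcomp Require Import all_boot all_order all_algebra all_fingroup.
From mathcomp Require Import ring reals.
Set Implicit Arguments. Unset Strict Implicit. Unset Printing Implicit Defensive.
Import Order.TTheory GRing.Theory Num.Theory.
Local Open Scope ring_scope.

(* Write N := (t I + A A^* )_{j.}(a^*_{i.}) as B plus t on the diagonal, except at (j, j).
   In a cycle of length at least 2 every factor is off-diagonal, so N and B agree there, while
   each fixed point c != j of a permutation contributes the binomial B_cc + t. Expanding these
   binomials and collecting the terms by the set alpha of indices where B was chosen, a
   permutation survives exactly when it is supported on alpha, with weight t^(m - |alpha|)
   (t is real, hence central). The permutations supported on alpha are the extensions of the
   permutations of the principal submatrix B^alpha_alpha; extension preserves the cycles, their
   smallest elements (alpha is enumerated increasingly) and the parity, so the part of the sum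
   supported on alpha is rdet_j (B^alpha_alpha). *)

Section ProdExpand.
Variable S : pzRingType.

Lemma prodrD_subsets (I : finType) (a b : I -> S) :
  \prod_i (a i + b i) = \sum_(A : {set I}) \prod_i (if i \in A then a i else b i).
Proof.
transitivity (\prod_i \sum_(x : bool) (if x then a i else b i)).
  by apply: eq_bigr => i _; rewrite big_bool /= addrC.
rewrite bigA_distr_bigA (reindex (fun A : {set I} => [ffun i => i \in A])) /=.
  by apply: eq_bigr => A _; apply: eq_bigr => i _; rewrite ffunE.
exists (fun f : {ffun I -> bool} => [set i | f i]) => A _.
  by apply/setP => i; rewrite inE ffunE.
by apply/ffunP => i; rewrite ffunE inE.
Qed.

Lemma prodr_if_central_seq (I : eqType) (r : seq I) (A : {pred I}) (P : pred I)
    (g : I -> S) (t : S) : (forall x, GRing.comm t x) ->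
  \prod_(c <- r) (if c \in A then g c else if P c then t else 0) =
  if all (fun c => (c \in A) || P c) r then
    t ^+ count (fun c => c \notin A) r * \prod_(c <- r) (if c \in A then g c else 1)
  else 0.
Proof.
move=> tC; elim: r => [|x r IH]; first by rewrite !big_nil /= mulr1.
rewrite !big_cons /= IH; case: (x \in A) => /=.
  case: ifP => _; last by rewrite mulr0.
  by rewrite !mulrA (commrX _ (commr_sym (tC _))).
case: (P x) => /=; last by rewrite mul0r.
case: ifP => _; last by rewrite mulr0.
by rewrite mul1r exprS mulrA.
Qed.

Lemma prodr_if_central (I : finType) (A : {set I}) (P : pred I) (g : I -> S) (t : S) :
    (forall x, GRing.comm t x) ->
  \prod_c (if c \in A then g c else if P c then t else 0) =
  if [forall c, (c \notin A) ==> P c] then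
    t ^+ #|~: A| * \prod_c (if c \in A then g c else 1)
  else 0.
Proof.
move=> tC; rewrite prodr_if_central_seq //.
have -> : all (fun c => (c \in A) || P c) (index_enum I) = [forall c, (c \notin A) ==> P c].
  apply/allP/forallP => [inAP c | outAP c _]; last by rewrite -implyNb outAP.
  by rewrite implyNb inAP ?mem_index_enum.
congr (if _ then _ ^+ _ * _ else _).
by rewrite -sum1_count -sum1_card; apply: eq_bigl => c; rewrite inE.
Qed.

End ProdExpand.

Lemma sum_sets_by_card (V : nmodType) (I : finType) (x : I) (G : {set I} -> nat -> V) :
  \sum_(A : {set I} | x \in A) G A #|A| =
  \sum_(1 <= k < #|I|.+1) \sum_(A : {set I} | (x \in A) && (#|A| == k)) G A k.
Proof.
rewrite [RHS](exchange_big_dep (fun A : {set I} => x \in A)) /=; last by move=> k A _ /andP[].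
apply: eq_bigr => A xA.
have A_gt0 : (0 < #|A|)%N by apply/card_gt0P; exists x.
rewrite xA big_mkcond (bigD1_seq #|A|) ?mem_index_iota ?A_gt0 ?ltnS ?max_card ?iota_uniq //=.
by rewrite eqxx big1_seq ?addr0 // => k /andP[/negbTE kA _]; rewrite eq_sym kA.
Qed.

Lemma signr_porbits (S : pzRingType) n (s : 'S_n) :
  (-1) ^+ (n - #|porbits s|) = (-1) ^+ odd_perm s :> S.
Proof.
rewrite /odd_perm card_ord -signr_odd oddB //.
by rewrite -[X in (_ <= X)%N]card_ord; apply: leq_imset_card.
Qed.

Lemma porbit_fix (T : finType) (s : {perm T}) (c : T) : s c = c -> porbit s c = [set c].
Proof.
move=> sc; apply/setP => d; rewrite inE; apply/porbitP/eqP => [[k ->]|->].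
  exact: permX_fix.
by exists 0%N; rewrite expg0 perm1.
Qed.

Lemma qreal_comm (R : comNzRingType) (t : R) (x : quat R) : GRing.comm (qreal t) x.
Proof.
case: x => a b c d; rewrite /GRing.comm.
change (qmul (qreal t) (Quat a b c d) = qmul (Quat a b c d) (qreal t)).
by rewrite /qmul /qreal /=; congr Quat; ring.
Qed.

Lemma row_repl_scalar_addE (S : pzRingType) m (M : 'M[S]_m) (a : S) j (b : 'rV_m) x y :
  row_repl (a%:M + M) j b x y =
  row_repl M j b x y + (if (x == y) && (x != j) then a else 0).
Proof.
rewrite !mxE; have [->|xj] := eqVneq x j; first by rewrite andbF addr0.
by rewrite andbT addrC; case: (x == y); rewrite ?mulr1n ?mulr0n ?add0r.
Qed.

Section RowDetShift.
Variables (R : comNzRingType) (m : nat).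
Implicit Types (M N : 'M[quat R]_m) (s : 'S_m).

Local Notation head_off j s c := ((c \notin porbit s j) && cycle_head s c).

Lemma cycle_prod_fix M s c : s c = c -> cycle_prod M s c = M c c.
Proof.
by move=> sc; rewrite /cycle_prod porbit_fix // cards1 big_ord1 expg0 expg1 perm1 sc.
Qed.

Lemma eq_cycle_prod M N s c : (forall x, s x != x -> M x (s x) = N x (s x)) ->
  s c != c -> cycle_prod M s c = cycle_prod N s c.
Proof.
move=> eqMN sc; apply: eq_bigr => k _; rewrite expgSr permM; apply: eqMN.
apply: contra sc => /eqP sx; apply/eqP/(@perm_inj _ (s ^+ k)%g).
by rewrite -permM -expgS expgSr permM.
Qed.

Lemma fixed_head_off s (j c : 'I_m) : s c = c -> c != j -> head_off j s c.
Proof.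
move=> sc cj; rewrite porbit_sym porbit_fix // inE eq_sym cj /=.
by apply/forallP => d; rewrite porbit_fix // inE; apply/implyP => /eqP ->.
Qed.

(* rdet_j of the principal submatrix with index set alpha, without reindexing alpha *)
Definition rdet_on (alpha : {set 'I_m}) (j : 'I_m) M : quat R :=
  \sum_(s | perm_on alpha s)
     (-1) ^+ (m - #|porbits s|) *
     (cycle_prod M s j * \prod_(c | (c \in alpha) && head_off j s c) cycle_prod M s c).

Lemma rdet_on_setT j M : rdet_on [set: 'I_m] j M = rdet j M.
Proof.
apply: eq_big => [s|s _]; first by apply/subsetP => x _; rewrite inE.
by under eq_bigl do rewrite inE.
Qed.

Section ShiftDiagonal.
Variables (B N : 'M[quat R]_m) (j : 'I_m) (t : R).
Hypothesis NE : forall x y, N x y = B x y + (if (x == y) && (x != j) then qreal t else 0).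

Lemma cycle_prod_shift_off s c : s c != c -> cycle_prod N s c = cycle_prod B s c.
Proof. by apply: eq_cycle_prod => x sx; rewrite NE eq_sym (negbTE sx) addr0. Qed.

Lemma cycle_prod_shift_j s : cycle_prod N s j = cycle_prod B s j.
Proof.
have [sj|] := eqVneq (s j) j; last exact: cycle_prod_shift_off.
by rewrite !cycle_prod_fix // NE eqxx addr0.
Qed.

Lemma prod_cycles_shift s :
  \prod_(c | head_off j s c) cycle_prod N s c =
  \sum_(alpha : {set 'I_m}) (if perm_on alpha s && (j \in alpha) then
     qreal t ^+ (m - #|alpha|) * \prod_(c | (c \in alpha) && head_off j s c) cycle_prod B s c
     else 0).
Proof.
have factorE c : (if head_off j s c then cycle_prod N s c else 1) =
    (if head_off j s c then cycle_prod B s c else 1) +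
    (if (s c == c) && (c != j) then qreal t else 0).
  have [sc|sc] /= := eqVneq (s c) c; last by rewrite addr0 cycle_prod_shift_off.
  have [->|cj] /= := eqVneq c j; first by rewrite porbit_id addr0.
  by rewrite fixed_head_off // !cycle_prod_fix // NE eqxx cj.
rewrite big_mkcond (eq_bigr _ (fun c _ => factorE c)) prodrD_subsets.
apply: eq_bigr => alpha _; rewrite prodr_if_central; last exact: qreal_comm.
have -> : [forall c, (c \notin alpha) ==> (s c == c) && (c != j)] =
          perm_on alpha s && (j \in alpha).
  apply/forallP/andP => [outP | [sA jA] c].
    split; last by have := outP j; rewrite eqxx andbF implybF negbK.
    apply/subsetP => c; rewrite inE; apply: contraR => cA.
    by have /implyP/(_ cA)/andP[] := outP c.
  apply/implyP => cA; rewrite (out_perm sA cA) eqxx.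
  by apply: contraNneq cA => ->.
case: ifP => // _; congr (_ ^+ _ * _).
  by rewrite cardsCs setCK card_ord.
by rewrite [RHS]big_mkcond; apply: eq_bigr => c _; case: (c \in alpha).
Qed.

Lemma rdet_shift_diag :
  rdet j N = \sum_(alpha : {set 'I_m} | j \in alpha) rdet_on alpha j B * qreal t ^+ (m - #|alpha|).
Proof.
rewrite /rdet; under eq_bigr do rewrite cycle_prod_shift_j prod_cycles_shift !mulr_sumr.
rewrite exchange_big [RHS]big_mkcond; apply: eq_bigr => alpha _.
have [jA|] := boolP (j \in alpha); last by rewrite big1 // => s _; rewrite andbF !mulr0.
rewrite /rdet_on mulr_suml [RHS]big_mkcond; apply: eq_bigr => s _.
rewrite andbT; case: ifP => _; last by rewrite !mulr0.
by rewrite -!mulrA; congr (_ * (_ * _)); apply/commr_sym/commrX/commr_sym/qreal_comm.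
Qed.

End ShiftDiagonal.
End RowDetShift.

Section PrincipalSubmatrix.
Variables (R : comNzRingType) (m : nat) (alpha : {set 'I_m}) (j : 'I_m).
Hypothesis jA : j \in alpha.
Implicit Types (a b : 'I_#|alpha|) (p q : 'S_#|alpha|).

Definition embed a : 'I_m := enum_val a.

Lemma embed_inj : injective embed. Proof. exact: enum_val_inj. Qed.

Lemma embedP a : embed a \in alpha. Proof. exact: enum_valP. Qed.

Lemma embed_rank x : x \in alpha -> embed (enum_rank_in jA x) = x.
Proof. exact: enum_rankK_in. Qed.

Lemma embed_ltn a b : (a < b)%N -> (embed a < embed b)%N.
Proof.
have ltn_ord_trans : transitive (fun x y : 'I_m => (x < y)%N).
  by move=> y x z; apply: ltn_trans.
have sorted_alpha : sorted (fun x y : 'I_m => (x < y)%N) (enum alpha).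
  apply: sorted_filter => //.
  by have := iota_ltn_sorted 0 m; rewrite -val_enum_ord sorted_map enumT.
move=> ab; rewrite /embed !(enum_val_nth j).
apply: (sorted_ltn_nth ltn_ord_trans j sorted_alpha) => //; rewrite inE -cardE ltn_ord //.
Qed.

Lemma leq_embed a b : (embed a <= embed b)%N = (a <= b)%N.
Proof.
case: (ltngtP a b) => [ab|ba|/ord_inj->]; last by rewrite leqnn.
  by rewrite ltnW ?embed_ltn.
by apply/negbTE; rewrite -ltnNge embed_ltn.
Qed.

Definition extend_fun p (x : 'I_m) : 'I_m :=
  if x \in alpha then embed (p (enum_rank_in jA x)) else x.

Lemma extend_fun_inj p : injective (extend_fun p).
Proof.
move=> x y; rewrite /extend_fun.
case: (boolP (x \in alpha)) => xA; case: (boolP (y \in alpha)) => yA.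
- by move/embed_inj/perm_inj/(enum_rank_in_inj xA yA).
- by move=> xy; move: yA; rewrite -xy embedP.
- by move=> xy; move: xA; rewrite xy embedP.
- by [].
Qed.

Definition extend p : 'S_m := perm (@extend_fun_inj p).

Lemma extend_embed p a : extend p (embed a) = embed (p a).
Proof. by rewrite permE /extend_fun embedP /embed enum_valK_in. Qed.

Lemma extend_out p x : x \notin alpha -> extend p x = x.
Proof. by move=> xA; rewrite permE /extend_fun (negbTE xA). Qed.

Lemma extend_on p : perm_on alpha (extend p).
Proof.
by apply/subsetP => x; rewrite inE; apply: contraR => xA; rewrite extend_out.
Qed.

Lemma extendX p n a : (extend p ^+ n)%g (embed a) = embed ((p ^+ n)%g a).
Proof.
by elim: n => [|n IH]; rewrite ?expg0 ?perm1 // !expgSr !permM IH extend_embed.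
Qed.

Lemma porbit_extend p a : porbit (extend p) (embed a) = embed @: porbit p a.
Proof.
apply/setP => d; apply/porbitP/imsetP => [[n ->]|[b /porbitP[n ->] ->]].
  by exists ((p ^+ n)%g a); [exact: mem_porbit | exact: extendX].
by exists n; rewrite extendX.
Qed.

Lemma cycle_prod_extend (M : 'M[quat R]_m) p a :
  cycle_prod M (extend p) (embed a) =
  cycle_prod (\matrix_(a1, a2) M (embed a1) (embed a2)) p a.
Proof.
rewrite /cycle_prod porbit_extend card_imset; last exact: embed_inj.
by apply: eq_bigr => n _; rewrite !extendX mxE.
Qed.

Lemma cycle_head_extend p a : cycle_head (extend p) (embed a) = cycle_head p a.
Proof.
rewrite /cycle_head porbit_extend; apply/forallP/forallP => headP b.
  by have := headP (embed b); rewrite (mem_imset _ _ embed_inj) leq_embed.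
by apply/implyP => /imsetP[c cP ->]; have := headP c; rewrite cP leq_embed.
Qed.

Lemma extend_inside p x : x \in alpha -> extend p x = embed (p (enum_rank_in jA x)).
Proof. by move=> xA; rewrite -{1}(embed_rank xA) extend_embed. Qed.

Lemma extendM p q : extend (p * q)%g = (extend p * extend q)%g.
Proof.
apply/permP => x; rewrite permM; have [xA|xA] := boolP (x \in alpha).
  by rewrite -(embed_rank xA) !extend_embed permM.
by rewrite !extend_out.
Qed.

Lemma extend1 : extend 1%g = 1%g.
Proof.
apply/permP => x; rewrite perm1; have [xA|xA] := boolP (x \in alpha).
  by rewrite -(embed_rank xA) extend_embed perm1.
by rewrite extend_out.
Qed.

Lemma extend_tperm a b : extend (tperm a b) = tperm (embed a) (embed b).
Proof.
apply/permP => x; have [xA|xA] := boolP (x \in alpha); last first.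
  by rewrite extend_out // tpermD //; apply: contraNneq xA => <-; exact: embedP.
rewrite -(embed_rank xA) extend_embed; set c := enum_rank_in jA x.
case: (tpermP a b c) => [->|->|/eqP ca /eqP cb]; rewrite ?tpermL ?tpermR //.
by rewrite tpermD // (inj_eq embed_inj) eq_sym.
Qed.

Lemma odd_extend p : odd_perm (extend p) = odd_perm p.
Proof.
case: (prod_tpermP p) => ts -> dts.
have -> : extend (\prod_(t <- ts) tperm t.1 t.2)%g =
    (\prod_(t <- map (fun t => (embed t.1, embed t.2)) ts) tperm t.1 t.2)%g.
  elim: ts {dts} => [|t ts IH]; first by rewrite !big_nil extend1.
  by rewrite /= !big_cons extendM extend_tperm IH.
rewrite !odd_perm_prod ?size_map // all_map.
by apply: sub_all dts => -[x y]; rewrite /= /dpair /= (inj_eq embed_inj).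
Qed.

Lemma extend_inj : injective extend.
Proof.
by move=> p q /permP epq; apply/permP => a; apply: embed_inj; rewrite -!extend_embed.
Qed.

Lemma sum_perm_on (F : 'S_m -> quat R) :
  \sum_(s | perm_on alpha s) F s = \sum_(p : 'S_#|alpha|) F (extend p).
Proof.
rewrite (eq_bigl (mem (extend @: [set: 'S_#|alpha|]))).
  by rewrite big_imset /=; [apply: eq_bigl => p; rewrite inE | move=> p q _ _; apply: extend_inj].
move=> s; apply/idP/imsetP => [sA | [p _ ->]]; last exact: extend_on.
have restr_inj : injective (fun a => enum_rank_in jA (s (embed a))).
  move=> a b ab; apply/embed_inj/(@perm_inj _ s).
  by apply: (enum_rank_in_inj _ _ ab); rewrite perm_closed // embedP.
exists (perm restr_inj); first by rewrite inE.
apply/permP => x; have [xA|xA] := boolP (x \in alpha); last by rewrite extend_out // (out_perm sA xA).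
by rewrite extend_inside // permE embed_rank // embed_rank // perm_closed.
Qed.

Lemma prod_embed (P : pred 'I_m) (F : 'I_m -> quat R) :
  \prod_(c | (c \in alpha) && P c) F c = \prod_(a | P (embed a)) F (embed a).
Proof.
have enum_alpha : enum alpha = map embed (enum 'I_#|alpha|).
  apply: (@eq_from_nth _ j); first by rewrite size_map size_enum_ord -cardE.
  move=> i; rewrite -cardE => ilt.
  by rewrite (nth_map (Ordinal ilt)) ?size_enum_ord // /embed (enum_val_nth j) nth_enum_ord.
rewrite -big_filter_cond [filter _ _](_ : _ = enum alpha); last by rewrite [index_enum _]unlock.
by rewrite enum_alpha big_map enumT unlock.
Qed.

Lemma rdet_principalE (M : 'M[quat R]_m) : rdet_principal M alpha j = rdet_on alpha j M.
Proof.
rewrite /rdet_principal; case: pickP => [a /eqP aj | noj]; last first.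
  by have := noj (enum_rank_in jA j); rewrite enum_rankK_in // eqxx.
rewrite /rdet_on sum_perm_on /rdet; apply: eq_bigr => p _.
rewrite -[j]aj -/(embed a) !signr_porbits odd_extend cycle_prod_extend prod_embed.
congr (_ * (_ * _)); apply: eq_big => [b|b _]; last by rewrite cycle_prod_extend.
by rewrite porbit_extend (mem_imset _ _ embed_inj) cycle_head_extend.
Qed.

End PrincipalSubmatrix.

Theorem lemma4p4 (R : realType) (m n : nat) (A : 'M[quat R]_(m, n)) (t : R)
    (i : 'I_n) (j : 'I_m) :
  let AAs := A *m conjtr A in
  let B := row_repl AAs j (row i (conjtr A)) in
  let r (k : nat) : quat R :=
    if k == m then rdet j B
    else \sum_(alpha : {set 'I_m} | (j \in alpha) && (#|alpha| == k))
           rdet_principal B alpha j in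
  rdet j (row_repl ((qreal t)%:M + AAs) j (row i (conjtr A)))
  = \sum_(1 <= k < m.+1) r k * qreal t ^+ (m - k).
Proof.
move=> AAs B r.
rewrite (rdet_shift_diag (B := B) (t := t)) => [|x y]; last exact: row_repl_scalar_addE.
rewrite (sum_sets_by_card j (fun alpha k => rdet_on alpha j B * qreal t ^+ (m - k))) card_ord.
apply: eq_big_nat => k _; rewrite /r; case: eqP => [->|_]; last first.
  by rewrite mulr_suml; apply: eq_bigr => alpha /andP[jA _]; rewrite rdet_principalE.
rewrite -rdet_on_setT (big_pred1 setT) // => alpha.
apply/andP/eqP => [[_ /eqP card_alpha]|->]; last by rewrite inE cardsT card_ord.
by apply/eqP; rewrite eqEcard subsetT cardsT card_ord card_alpha leqnn.
Qed.
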